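(* Let $\mathcal C$ be a concept hierarchy, $r_1,r_2,\epsilon\in[0,1]$ with $r_1\le r_2(1-\epsilon)$, $m$ a positive integer, and let $\mathcal H$ be the network defined below with a fixed failed set $F$ satisfying the stated constraint. Then $\mathcal H$ $(r_1,r_2)$-recognizes $\mathcal C$: for every $B\subseteq C_0$ presented at time 0, (1) if $c\in supp_{r_2}(B)$ then at least $m(1-\epsilon)$ of the neurons $v\in reps(c)$ fire at time $level(c)$, and (2) if $c\notin supp_{r_1}(B)$ then no neuron $v\in reps(c)$ fires at time $level(c)$.
   Context: Concept hierarchies: fix positive integers $\ell_{max},n,k$. A universal set $D$ of concepts is partitioned into disjoint sets $D_0,\dots,D_{\ell_{max}}$ with $|D_0|=n$; $level(c)=\ell$ for $c\in D_\ell$. A concept hierarchy $\mathcal C$ consists of $C\subseteq D$, with $C_\ell=C\cap D_\ell$, and for each $c\in C_\ell$ with $1\le\ell\le\ell_{max}$ a set $children(c)\subseteq C_{\ell-1}$, such that $|C_{\ell_{max}}|=k$, $|children(c)|=k$ for all such $c$, and $children(c)\cap children(c')=\emptyset$ for distinct $c,c'\in C_\ell$. For $B\subseteq D_0$ and $r\in[0,1]$: $B(0)=B\cap C_0$; for $1\le\ell\le\ell_{max}$, $B(\ell)=\{c\in C_\ell:|children(c)\cap B(\ell-1)|\ge rk\}$; $supp_r(B)=\bigcup_{\ell}B(\ell)$. Network $\mathcal H$: neurons partitioned into layers $N_0,\dots,N_{\ell_{max}}$. Each $c\in D_0$ has a set $reps(c)$ of $m$ neurons in $N_0$, each $c\in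 C$ with $level(c)\ge1$ a set $reps(c)$ of $m$ neurons in $N_{level(c)}$, all pairwise disjoint. For $u\in N_{\ell-1}$, $v\in N_\ell$: $w(u,v)=1$ iff $v\in reps(c)$ and $u\in reps(c')$ for a child $c'$ of $c$, else $0$. Threshold $\tau=r_2km(1-\epsilon)$. A fixed set $F$ of neurons is failed (failed neurons never fire), such that for every concept $c$ at least $m(1-\epsilon)$ neurons of $reps(c)$ are not in $F$. Input $B\subseteq C_0$ presented at time 0: a layer-0 neuron fires at time 0 iff it is in $\bigcup_{b\in B}reps(b)\setminus F$, and no layer-0 neuron fires at any other time. A non-failed $v\in N_\ell$, $\ell\ge1$, does not fire at time 0 and fires at time $t\ge1$ iff $\sum_{u\in N_{\ell-1}}w(u,v)x_u(t-1)\ge\tau$, where $x_u(s)\in\{0,1\}$ indicates whether $u$ fires at time $s$. *)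

From mathcomp Require Import all_boot all_order all_algebra.
Set Implicit Arguments. Unset Strict Implicit. Unset Printing Implicit Defensive.
Import Order.TTheory GRing.Theory Num.Theory.
Local Open Scope ring_scope.

Section ConceptHierarchy.
Variables (D : finType) (level : D -> nat) (lmax n k : nat).

Definition universal_ok : Prop :=
  (forall c, (level c <= lmax)%N) /\ #|[set c | level c == 0%N]| = n.

(* A concept hierarchy: C ⊆ D together with [children] (only meaningful for
   c ∈ C with level c >= 1). *)
Definition is_concept_hierarchy (C : {set D}) (children : D -> {set D}) : Prop :=
  [/\ #|[set c in C | level c == lmax]| = k,
      (forall c, c \in C -> (1 <= level c)%N ->
         children c \subset [set c' in C | level c' == (level c).-1]),
      (forall c, c \in C -> (1 <= level c)%N -> #|children c| = k) &
      (forall c c', c \in C -> c' \in C -> (1 <= level c)%N ->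
         level c = level c' -> c != c' -> [disjoint children c & children c'])].

Variables (C : {set D}) (children : D -> {set D}).

Fixpoint Bl (R : numDomainType) (r : R) (B : {set D}) (l : nat) : {set D} :=
  match l with
  | 0%N => B :&: [set c in C | level c == 0%N]
  | l'.+1 => [set c in C | (level c == l'.+1) &&
                (r * k%:R <= (#|children c :&: Bl r B l'|)%:R)]
  end.

Definition supp (R : numDomainType) (r : R) (B : {set D}) : {set D} :=
  \bigcup_(l < lmax.+1) Bl r B l.

End ConceptHierarchy.

Section Network.
Variables (D : finType) (level : D -> nat) (lmax : nat)
          (C : {set D}) (children : D -> {set D}).
Variables (N : finType) (layer : N -> nat) (reps : D -> {set N}) (m : nat).

Definition has_reps (c : D) : bool := (level c == 0%N) || (c \in C).

Definition network_ok : Prop :=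
  [/\ (forall u, (layer u <= lmax)%N),
      (forall c, has_reps c -> #|reps c| = m),
      (forall c, has_reps c -> reps c \subset [set u | layer u == level c]) &
      (forall c c', has_reps c -> has_reps c' -> c != c' ->
         [disjoint reps c & reps c'])].

Definition weight (u v : N) : nat :=
  [exists c, [&& c \in C, (1 <= level c)%N, v \in reps c &
     [exists c', (c' \in children c) && (u \in reps c')]]].

Variables (R : numDomainType) (tau : R) (F : {set N}) (B : {set D}).

Fixpoint fires (t : nat) : N -> bool :=
  match t with
  | 0%N => fun v => [&& layer v == 0%N, v \notin F &
                       [exists b in B, v \in reps b]]
  | t'.+1 => fun v => [&& layer v != 0%N, v \notin F &
       tau <= (\sum_(u | layer u == (layer v).-1) (weight u v * fires t' u))%N%:R]
  end.

End Network.

From mathcomp Require Import all_boot all_order all_algebra.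
From mathcomp Require Import ring.
Import Order.TTheory GRing.Theory Num.Theory.
Local Open Scope ring_scope.

(* A neuron v of reps(c) receives weight 1 exactly from the representatives
   of the children of c, so its input at time t+1 is the number of those
   representatives firing at time t.  If c is in B(l) for r2, at least r2 k children are in B(l-1),
   all their >= m(1-eps) surviving representatives fire, and the input reaches
   tau = r2 k m(1-eps).  Conversely, only children in B(l-1) for r1 have
   firing representatives, at most m each, so a firing neuron of c needs at
   least tau/m = r2(1-eps) k >= r1 k such children. *)

Section Recognition.
Context {D : finType} {level : D -> nat} {lmax k : nat}
  {C : {set D}} {children : D -> {set D}}.
Hypothesis HC : is_concept_hierarchy level lmax k C children.
Context {N : finType} {layer : N -> nat} {reps : D -> {set N}} {m : nat}.
Hypothesis HN : network_ok level lmax C layer reps m.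
Context {R : numDomainType} {tau : R} {F : {set N}} {B : {set D}}.
Hypothesis HB : B \subset [set c in C | level c == 0%N].

Local Notation has_reps := (has_reps level C).
Local Notation fire := (fires level C children layer reps tau F B).
Local Notation Bl r := (Bl level k C children r B).
Local Notation firing t c := [set u in reps c | fire t u].

Lemma has_reps_of_C {c} : c \in C -> has_reps c.
Proof. by move=> cC; rewrite /has_reps cC orbT. Qed.

Lemma eq_of_mem_reps {c c' v} : has_reps c -> has_reps c' ->
  v \in reps c -> v \in reps c' -> c = c'.
Proof.
case: HN => _ _ _ reps_disj rc rc' vc vc'; apply/eqP/negP => /negP neq.
by rewrite (disjointFr (reps_disj _ _ rc rc' neq) vc) in vc'.
Qed.

Lemma layer_reps {c v} : has_reps c -> v \in reps c -> layer v = level c.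
Proof.
case: HN => _ _ reps_layer _ rc vc.
by have := subsetP (reps_layer c rc) v vc; rewrite inE => /eqP.
Qed.

Lemma children_sub_level {c c'} : c \in C -> (0 < level c)%N -> c' \in children c ->
  c' \in C /\ level c' = (level c).-1.
Proof.
case: HC => _ children_sub _ _ cC lc c'c.
by have := subsetP (children_sub c cC lc) c' c'c; rewrite inE => /andP[-> /eqP].
Qed.

Lemma weight_reps u {c v} : c \in C -> (0 < level c)%N -> v \in reps c ->
  weight level C children reps u v = (\sum_(c' in children c) (u \in reps c'))%N.
Proof.
move=> cC lc vc; rewrite /weight.
rewrite (_ : [exists c0, _] = [exists c', (c' \in children c) && (u \in reps c')]); last first.
  apply/existsP/idP => [[c0 /and4P[c0C _ vc0]] | u_child]; last by exists c; rewrite cC lc vc.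
  by rewrite -(eq_of_mem_reps (has_reps_of_C c0C) (has_reps_of_C cC) vc0 vc).
case: existsP => [[c0 /andP[c0c uc0]] | no_child].
- rewrite (bigD1 c0) //= uc0 big1 // => c1 /andP[c1c neq].
  have [uc1 | //] := boolP (u \in reps c1); case/eqP: neq.
  have [c0C _] := children_sub_level cC lc c0c; have [c1C _] := children_sub_level cC lc c1c.
  exact: eq_of_mem_reps (has_reps_of_C c1C) (has_reps_of_C c0C) uc1 uc0.
- rewrite big1 // => c1 c1c; have [uc1 | //] := boolP (u \in reps c1).
  by case: no_child; exists c1; rewrite c1c.
Qed.

Lemma input_reps t {c v} : c \in C -> (0 < level c)%N -> v \in reps c ->
  (\sum_(u | layer u == (layer v).-1) (weight level C children reps u v * fire t u))%N
  = (\sum_(c' in children c) #|firing t c'|)%N.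
Proof.
move=> cC lc vc; rewrite (layer_reps (has_reps_of_C cC) vc).
under eq_bigr => u _ do rewrite (weight_reps u cC lc vc) big_distrl /=.
rewrite exchange_big /=; apply: eq_bigr => c' c'c.
have [c'C lc'] := children_sub_level cC lc c'c.
rewrite -sum1_card [RHS]big_mkcond [LHS]big_mkcond /=; apply: eq_bigr => u _.
rewrite inE; case uc': (u \in reps c'); last by case: ifP.
by rewrite (layer_reps (has_reps_of_C c'C) uc') lc' eqxx; case: (fire t u).
Qed.

Lemma fires0_reps {c v} : has_reps c -> v \in reps c ->
  fire 0 v = [&& level c == 0%N, v \notin F & c \in B].
Proof.
move=> rc vc /=; rewrite (layer_reps rc vc); congr [&& _, _ & _].
apply/existsP/idP => [[b /andP[bB vb]] | cB]; last by exists c; rewrite cB vc.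
have /subsetP/(_ b bB) := HB; rewrite inE => /andP[bC _].
by rewrite -(eq_of_mem_reps (has_reps_of_C bC) rc vb vc).
Qed.

Lemma firesS_reps t {c v} : c \in C -> (0 < level c)%N -> v \in reps c ->
  fire t.+1 v = (v \notin F) && (tau <= (\sum_(c' in children c) #|firing t c'|)%:R).
Proof.
move=> cC lc vc /=; rewrite (input_reps t cC lc vc).
by rewrite (layer_reps (has_reps_of_C cC) vc) -lt0n lc.
Qed.

Lemma Bl_level {r : R} {l c} : c \in Bl r l -> c \in C /\ level c = l.
Proof.
case: l => [|l] /=; rewrite !inE; first by case/andP=> _ /andP[-> /eqP].
by case/andP=> -> /andP[/eqP -> _].
Qed.

Lemma Bl_fires {r q : R} (q_ge0 : 0 <= q)
    (survivors : forall c, has_reps c -> q <= #|reps c :\: F|%:R)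
    (tau_le : tau <= r * k%:R * q) {l c} :
  c \in Bl r l -> reps c :\: F \subset firing l c.
Proof.
elim: l c => [|l IH] c cB; have [cC lc] := Bl_level cB.
all: apply/subsetP => v; rewrite !inE => /andP[vF vc]; rewrite vc.
  have /setIP[cB0 _] := cB.
  by rewrite (fires0_reps (has_reps_of_C cC) vc) lc vF cB0.
have lc_gt0 : (0 < level c)%N by rewrite lc.
rewrite (firesS_reps _ cC lc_gt0 vc) vF /=; apply: le_trans tau_le _.
have : r * k%:R <= #|children c :&: Bl r l|%:R by move: cB; rewrite /= inE => /and3P[].
move/(ler_wpM2r q_ge0)/le_trans; apply.
rewrite natr_sum (big_setID (Bl r l)) /= -[_ * q]addr0 mulr_natl -sumr_const.
apply: lerD; last exact: sumr_ge0.
apply: ler_sum => c' /setIP[c'c c'B]; have [c'C _] := children_sub_level cC lc_gt0 c'c.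
apply: le_trans (survivors c' (has_reps_of_C c'C)) _.
by rewrite ler_nat subset_leq_card ?IH.
Qed.

Lemma fires_Bl {r : R} (tau_ge : r * k%:R * m%:R <= tau) {l c v} :
  c \in C -> level c = l -> v \in reps c -> fire l v -> c \in Bl r l.
Proof.
elim: l c v => [|l IH] c v cC lc vc.
  rewrite (fires0_reps (has_reps_of_C cC) vc) => /and3P[_ _ cB].
  by rewrite /= !inE cB cC lc.
have lc_gt0 : (0 < level c)%N by rewrite lc.
rewrite (firesS_reps _ cC lc_gt0 vc) => /andP[_ tau_le].
case: HN => _ reps_card _ _.
have m_gt0 : (0 < m)%N.
  by rewrite -(reps_card c (has_reps_of_C cC)) card_gt0; apply/set0Pn; exists v.
have input_le : (\sum_(c' in children c) #|firing l c'| <= #|children c :&: Bl r l| * m)%N.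
  rewrite (big_setID (Bl r l)) /= [X in (_ + X)%N]big1 => [|c' /setDP[c'c c'B]].
    rewrite addn0 -sum_nat_const; apply: leq_sum => c' /setIP[c'c _].
    have [c'C _] := children_sub_level cC lc_gt0 c'c.
    by rewrite -(reps_card c' (has_reps_of_C c'C)) subset_leq_card // setIdE subsetIl.
  have [c'C lc'] := children_sub_level cC lc_gt0 c'c; rewrite lc /= in lc'.
  apply/eqP; rewrite cards_eq0 -subset0; apply/subsetP => u; rewrite inE => /andP[uc' fu].
  by case/negP: c'B; apply: IH c'C lc' uc' fu.
rewrite /= inE cC lc eqxx /= -(ler_pM2r (x := m%:R)) ?ltr0n //.
by apply: le_trans tau_ge (le_trans tau_le _); rewrite -natrM ler_nat.
Qed.

End Recognition.

Theorem theorem7p5 (R : realFieldType)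
  (lmax n k : nat) (Hlmax : (0 < lmax)%N) (Hn : (0 < n)%N) (Hk : (0 < k)%N)
  (D : finType) (level : D -> nat) (HD : universal_ok level lmax n)
  (C : {set D}) (children : D -> {set D})
  (HC : is_concept_hierarchy level lmax k C children)
  (r1 r2 eps : R)
  (Hr1 : 0 <= r1 <= 1) (Hr2 : 0 <= r2 <= 1) (Heps : 0 <= eps <= 1)
  (Hr12 : r1 <= r2 * (1 - eps))
  (m : nat) (Hm : (0 < m)%N)
  (N : finType) (layer : N -> nat) (reps : D -> {set N})
  (HN : network_ok level lmax C layer reps m)
  (F : {set N})
  (HF : forall c, has_reps level C c ->
          m%:R * (1 - eps) <= (#|reps c :\: F|)%:R) :
  let tau := r2 * k%:R * m%:R * (1 - eps) in
  forall B : {set D}, B \subset [set c in C | level c == 0%N] ->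
  forall c, c \in C ->
    (c \in supp level lmax k C children r2 B ->
       m%:R * (1 - eps) <=
       (#|[set v in reps c | fires level C children layer reps tau F B (level c) v]|)%:R)
    /\
    (c \notin supp level lmax k C children r1 B ->
       forall v, v \in reps c ->
         ~~ fires level C children layer reps tau F B (level c) v).
Proof.
move=> tau B HB c cC; split.
- case/bigcupP => l _ cB; have [_ lc] := Bl_level cB; rewrite lc.
  have q_ge0 : 0 <= m%:R * (1 - eps) by rewrite mulr_ge0 // subr_ge0; case/andP: Heps.
  have tau_le : tau <= r2 * k%:R * (m%:R * (1 - eps)) by rewrite /tau !mulrA.
  apply: le_trans (HF c (has_reps_of_C cC)) _.
  by rewrite ler_nat subset_leq_card // (Bl_fires HC HN HB q_ge0 HF tau_le cB).
- move=> c_supp v vc; apply: contra c_supp => fv; apply/bigcupP.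
  have lc_lt : (level c < lmax.+1)%N by case: HD => level_le _; rewrite ltnS.
  have tau_ge : r1 * k%:R * m%:R <= tau.
    rewrite -mulrA /tau (_ : _ * _ * (1 - eps) = r2 * (1 - eps) * (k%:R * m%:R)); last by ring.
    by rewrite ler_wpM2r // mulr_ge0.
  by exists (Ordinal lc_lt) => //; apply: (fires_Bl HC HN HB tau_ge cC erefl vc fv).
Qed.
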